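(* In the safe linear bandit setting with ROFUL as described in the context (with all its standing assumptions), on the event $\mathcal{E}_{\mathrm{conf}}$, for all $t\in[T]$, $$\theta^\top(\tilde x_t-x_t)\le S_\theta\frac{2\beta_t}{b}\|x_t\|_{V_t^{-1}}.$$
   Context: Safe linear bandit setting: at round $t$ the learner plays $x_t$ in a closed set $\mathcal{X}\subseteq\mathbb{R}^d$ and observes $y_t=\theta^\top x_t+\epsilon_t$, $z_t=a^\top x_t+\eta_t$, with $\theta,a$ unknown and $b>0$ known; $\mathcal{Y}=\{x\in\mathcal{X}:a^\top x\le b\}$, $x_*\in\arg\max_{\mathcal{Y}}\theta^\top x$. Standing assumptions: $\mathcal{X}$ star-convex w.r.t. the origin, $\|x\|\le1$ on $\mathcal{X}$, $\theta^\top x_*>0$; $\|a\|\le S_a$, $\|\theta\|\le S_\theta$, $S=\max(S_a,S_\theta)$, $\nu=b/S_a\le1$. Parameters $\rho>0$, $\delta\in(0,1)$, $\lambda\ge1$. ROFUL: $V_t=\lambda I+\sum_{k<t}x_kx_k^\top$, $\hat a_t=V_t^{-1}\sum_{k<t}x_kz_k$, $\hat\theta_t=V_t^{-1}\sum_{k<t}x_ky_k$, $\beta_t=\rho\sqrt{d\log\left(\frac{1+(t-1)/\lambda}{\delta/2}\right)}+\sqrt\lambda S$, $\|x\|_M=\sqrt{x^\top Mx}$; $\mathcal{Y}_t^p=\{x\in\mathcal{X}:\hat a_t^\top x+\beta_t\|x\|_{V_t^{-1}}\le b\}$, $\mathcal{Y}_t^o=\{x\in\mathcal{X}:\hat a_t^\top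 x-\beta_t\|x\|_{V_t^{-1}}\le b\}$; $\tilde x_t\in\arg\max_{x\in\mathcal{Y}_t^o}(\hat\theta_t^\top x+\beta_t\|x\|_{V_t^{-1}})$; $\gamma_t=\max(\min(\nu/\|\tilde x_t\|,1),\max\{\mu\in[0,1]:\mu\tilde x_t\in\mathcal{Y}_t^p\})$; play $x_t=\gamma_t\tilde x_t$. $\mathcal{E}_{\mathrm{conf}}$: the event that $|x^\top(\hat\theta_t-\theta)|\le\beta_t\|x\|_{V_t^{-1}}$ and $|x^\top(\hat a_t-a)|\le\beta_t\|x\|_{V_t^{-1}}$ for all $x\in\mathcal{X}$ and all $t\ge1$. *)

From HB Require Import structures.
From mathcomp Require Import all_boot all_order all_algebra.
From mathcomp Require Import all_classical all_reals all_analysis.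
Set Implicit Arguments. Unset Strict Implicit. Unset Printing Implicit Defensive.
Import Order.TTheory GRing.Theory Num.Theory.
Import numFieldNormedType.Exports.
Local Open Scope classical_set_scope.
Local Open Scope ring_scope.

Section SafeBandit.
Variables (R : realType) (d : nat).

Definition dot (u v : 'cV[R]_d) : R := (u^T *m v) 0 0.
Definition enorm (v : 'cV[R]_d) : R := Num.sqrt (dot v v).
Definition normM (M : 'M[R]_d) (v : 'cV[R]_d) : R := Num.sqrt ((v^T *m M *m v) 0 0).

(* Rounds are indexed t = 1, 2, ...; the history before round t is k = 1..t-1. *)
Definition Vt (lam : R) (x : nat -> 'cV[R]_d) (t : nat) : 'M[R]_d :=
  lam%:M + \sum_(1 <= k < t) (x k *m (x k)^T).

Definition lsest (lam : R) (x : nat -> 'cV[R]_d) (o : nat -> R) (t : nat) : 'cV[R]_d :=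
  invmx (Vt lam x t) *m \sum_(1 <= k < t) (o k *: x k).

Definition betat (rho delta lam S : R) (t : nat) : R :=
  rho * Num.sqrt (d%:R * ln ((1 + (t - 1)%:R / lam) / (delta / 2))) + Num.sqrt lam * S.

Definition Ysafe (X : set 'cV[R]_d) (a : 'cV[R]_d) (b : R) : set 'cV[R]_d :=
  [set v | X v /\ dot a v <= b].

Definition Yp (X : set 'cV[R]_d) (ahat : 'cV[R]_d) (beta : R) (Vinv : 'M[R]_d) (b : R)
  : set 'cV[R]_d :=
  [set v | X v /\ dot ahat v + beta * normM Vinv v <= b].

Definition Yo (X : set 'cV[R]_d) (ahat : 'cV[R]_d) (beta : R) (Vinv : 'M[R]_d) (b : R)
  : set 'cV[R]_d :=
  [set v | X v /\ dot ahat v - beta * normM Vinv v <= b].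

(* gamma_t = max(min(nu/||xt||, 1), max{mu in [0,1] : mu xt in Y^p_t});
   convention nu/0 = +oo, i.e. min(nu/||xt||,1) = 1 when xt = 0.
   The inner max is written as a sup (the set is closed, contains 0, bounded by 1). *)
Definition gammat (nu : R) (Ypt : set 'cV[R]_d) (xt : 'cV[R]_d) : R :=
  Num.max (if enorm xt == 0 then 1 else Num.min (nu / enorm xt) 1)
          (sup [set mu : R | 0 <= mu <= 1 /\ Ypt (mu *: xt)]).

(* One round t of ROFUL, given the whole trajectory x (played actions),
   y, z (observations) and xt (the optimistic actions tilde x_t). *)
Definition roful_round (X : set 'cV[R]_d) (b Sa rho delta lam S : R)
  (x xt : nat -> 'cV[R]_d) (y z : nat -> R) (t : nat) : Prop :=
  let Vinv := invmx (Vt lam x t) in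
  let bt := betat rho delta lam S t in
  let ah := lsest lam x z t in
  let th := lsest lam x y t in
  [/\ Yo X ah bt Vinv b (xt t),
      (forall v, Yo X ah bt Vinv b v ->
         dot th v + bt * normM Vinv v <= dot th (xt t) + bt * normM Vinv (xt t)) &
      x t = gammat (b / Sa) (Yp X ah bt Vinv b) (xt t) *: xt t].

Definition E_conf (X : set 'cV[R]_d) (theta a : 'cV[R]_d) (rho delta lam S : R)
  (x : nat -> 'cV[R]_d) (y z : nat -> R) : Prop :=
  forall t : nat, (1 <= t)%N -> forall v, X v ->
    `|dot v (lsest lam x y t - theta)| <= betat rho delta lam S t * normM (invmx (Vt lam x t)) v
    /\ `|dot v (lsest lam x z t - a)| <= betat rho delta lam S t * normM (invmx (Vt lam x t)) v.

End SafeBandit.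

From HB Require Import structures.
From mathcomp Require Import all_boot all_order all_algebra.
From mathcomp Require Import all_classical all_reals all_analysis.
From mathcomp Require Import ring lra.
Set Implicit Arguments. Unset Strict Implicit. Unset Printing Implicit Defensive.
Import Order.TTheory GRing.Theory Num.Theory.
Import numFieldNormedType.Exports.
Local Open Scope classical_set_scope.
Local Open Scope ring_scope.

(* Write n = ||x~_t||_{V_t^-1} and g = gamma_t.  Since x~_t lies in the
   optimistic set, ahat^T x~_t <= b + beta n, so by star-convexity the multiple
   b / (b + 2 beta n) of x~_t lies in the pessimistic set; hence
   g >= b / (b + 2 beta n), i.e. (1 - g) b <= 2 beta g n.  By Cauchy-Schwarz
   theta^T (x~_t - x_t) = (1 - g) theta^T x~_t <= (1 - g) S_theta, and
   g n = ||x_t||_{V_t^-1}. *)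

Section EuclideanGeometry.
Variables (R : realType) (d : nat).
Implicit Types (u v w : 'cV[R]_d) (s : R).

Lemma dotE u v : dot u v = \sum_i u i 0 * v i 0.
Proof. by rewrite /dot !mxE; apply: eq_bigr => i _; rewrite mxE. Qed.

Lemma dotC u v : dot u v = dot v u.
Proof. by rewrite !dotE; apply: eq_bigr => i _; rewrite mulrC. Qed.

Lemma dot0l v : dot 0 v = 0.
Proof. by rewrite /dot trmx0 mul0mx mxE. Qed.

Lemma dotBr u v w : dot u (v - w) = dot u v - dot u w.
Proof. by rewrite /dot mulmxBr !mxE. Qed.

Lemma dotZr u v s : dot u (s *: v) = s * dot u v.
Proof. by rewrite /dot -scalemxAr mxE. Qed.

Lemma dotBl u v w : dot (v - w) u = dot v u - dot w u.
Proof. by rewrite dotC dotBr !(dotC u). Qed.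

Lemma dotZl u v s : dot (s *: v) u = s * dot v u.
Proof. by rewrite dotC dotZr dotC. Qed.

Lemma dot_ge0 u : 0 <= dot u u.
Proof. by rewrite dotE sumr_ge0 // => i _; rewrite -expr2 sqr_ge0. Qed.

Lemma dot_eq0 u : (dot u u == 0) = (u == 0).
Proof.
rewrite dotE psumr_eq0 => [|i _]; last by rewrite -expr2 sqr_ge0.
apply/allP/eqP => [u0|-> i _]; last by rewrite /= mxE mul0r.
apply/matrixP => i j; rewrite ord1 mxE.
by apply/eqP; rewrite -[_ == 0]orbb -mulf_eq0; apply: u0; rewrite mem_index_enum.
Qed.

Lemma enorm_ge0 u : 0 <= enorm u.
Proof. exact: sqrtr_ge0. Qed.

Lemma sqr_enorm u : enorm u ^+ 2 = dot u u.
Proof. by rewrite sqr_sqrtr ?dot_ge0. Qed.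

Lemma enorm_gt0 u : u != 0 -> 0 < enorm u.
Proof. by move=> nz_u; rewrite sqrtr_gt0 lt_def dot_eq0 nz_u dot_ge0. Qed.

Lemma dot_le_enorm u v : dot u v <= enorm u * enorm v.
Proof.
have [->|nz_u] := eqVneq u 0; first by rewrite dot0l mulr_ge0 ?enorm_ge0.
have [->|nz_v] := eqVneq v 0; first by rewrite dotC dot0l mulr_ge0 ?enorm_ge0.
have p0 := enorm_gt0 nz_u; have q0 := enorm_gt0 nz_v.
(* |q u - p v|^2 = 2 p q (p q - u.v) for p = |u|, q = |v| *)
have := dot_ge0 (enorm v *: u - enorm u *: v).
rewrite dotBl !dotBr !dotZl !dotZr (dotC v u) -!sqr_enorm.
set p := enorm u; set q := enorm v; set c := dot u v => h.
have : 0 <= 2 * (p * q) * (p * q - c) by move: h; congr (_ <= _); ring.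
by rewrite pmulr_rge0 ?mulr_gt0 // subr_ge0.
Qed.

End EuclideanGeometry.

Section WeightedNorm.
Variables (R : realType) (d : nat).
Implicit Types (M : 'M[R]_d) (v : 'cV[R]_d).

Lemma normM_ge0 M v : 0 <= normM M v.
Proof. exact: sqrtr_ge0. Qed.

Lemma normMZ M v (g : R) : 0 <= g -> normM M (g *: v) = g * normM M v.
Proof.
move=> g0; rewrite /normM -scalemxAr [(g *: v)^T]linearZ -!scalemxAl.
by rewrite 2!mxE mulrA -expr2 sqrtrM ?sqr_ge0 // sqrtr_sqr ger0_norm.
Qed.

End WeightedNorm.

Lemma fraction01 (R : realFieldType) (b beta n : R) :
  0 < b -> 0 <= beta -> 0 <= n -> 0 <= b / (b + 2 * beta * n) <= 1.
Proof.
move=> b0 beta0 n0; have den0 : 0 < b + 2 * beta * n by rewrite ltr_wpDr // !mulr_ge0.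
by rewrite divr_ge0 ?(ltW b0) ?(ltW den0) //= ler_pdivrMr // mul1r lerDl !mulr_ge0.
Qed.

Lemma gap_le_of_fraction_le (R : realFieldType) (b beta n g c s : R) :
  0 < b -> 0 <= beta -> 0 <= n -> g <= 1 -> c <= s -> 0 <= s ->
  b / (b + 2 * beta * n) <= g -> c - g * c <= s * (2 * beta / b) * (g * n).
Proof.
move=> b0 beta0 n0 g1 cs s0.
have den0 : 0 < b + 2 * beta * n by rewrite ltr_wpDr // !mulr_ge0.
rewrite ler_pdivrMr // => hg.
have -> : s * (2 * beta / b) * (g * n) = s * (2 * beta * g * n) / b.
  by field; rewrite gt_eqF.
rewrite ler_pdivlMr //.
have h1 : 0 <= (1 - g) * (s - c) * b by rewrite !mulr_ge0 ?subr_ge0 // ltW.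
have h2 : 0 <= s * (g * (b + 2 * beta * n) - b) by rewrite mulr_ge0 ?subr_ge0.
lra.
Qed.

Section Roful.
Variables (R : realType) (d : nat).
Implicit Types (X : set 'cV[R]_d) (v ah : 'cV[R]_d) (Vinv : 'M[R]_d) (b beta : R).

Lemma betat_ge0 (rho delta lam S : R) t :
  0 <= rho -> 0 <= S -> 0 <= betat d rho delta lam S t.
Proof. by move=> rho0 S0; rewrite addr_ge0 // mulr_ge0 ?sqrtr_ge0. Qed.

Lemma Yo_scale_Yp X ah beta Vinv b v :
  (forall w, X w -> forall mu : R, 0 <= mu <= 1 -> X (mu *: w)) ->
  0 < b -> 0 <= beta -> Yo X ah beta Vinv b v ->
  Yp X ah beta Vinv b ((b / (b + 2 * beta * normM Vinv v)) *: v).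
Proof.
move=> starX b0 beta0 [Xv Yo_v].
have n0 := normM_ge0 Vinv v; set n := normM Vinv v in Yo_v n0 *.
have /andP[mu0 mu1] := fraction01 b0 beta0 n0; set mu := b / (b + 2 * beta * n) in mu0 mu1 *.
split; first by apply: starX; rewrite ?mu0 ?mu1.
have muE : mu * (b + 2 * beta * n) = b by rewrite mulfVK // gt_eqF // ltr_wpDr // !mulr_ge0.
rewrite dotZr normMZ // -/n -[leRHS]muE.
have -> : mu * dot ah v + beta * (mu * n) = mu * (dot ah v + beta * n) by ring.
by rewrite ler_wpM2l //; lra.
Qed.

Lemma gammat_ge (nu mu : R) (Ypt : set 'cV[R]_d) v :
  0 <= mu <= 1 -> Ypt (mu *: v) -> mu <= gammat nu Ypt v.
Proof.
move=> mu01 Ymu; rewrite le_max; apply/orP; right.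
by apply: ub_le_sup => [|//]; exists 1 => m [/andP[]].
Qed.

Lemma gammat_le1 (nu : R) (Ypt : set 'cV[R]_d) v : gammat nu Ypt v <= 1.
Proof.
rewrite ge_max; apply/andP; split; first by case: ifP => // _; rewrite ge_min lexx orbT.
set S := [set mu | _]; have [->|/set0P neS] := eqVneq S set0; first by rewrite sup0.
by apply: ge_sup => // m [/andP[]].
Qed.

End Roful.

Theorem lemma5 (R : realType) (d : nat) (X : set 'cV[R]_d) (theta a : 'cV[R]_d)
  (b Sa Sth rho delta lam : R) (x_star : 'cV[R]_d)
  (x xt : nat -> 'cV[R]_d) (y z eps eta : nat -> R) (T : nat) :
  closed X ->
  (forall v, X v -> forall mu : R, 0 <= mu <= 1 -> X (mu *: v)) ->
  (forall v, X v -> enorm v <= 1) ->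
  0 < b -> 0 < Sa -> enorm a <= Sa -> enorm theta <= Sth -> b / Sa <= 1 ->
  0 < rho -> 0 < delta < 1 -> 1 <= lam ->
  Ysafe X a b x_star ->
  (forall v, Ysafe X a b v -> dot theta v <= dot theta x_star) ->
  0 < dot theta x_star ->
  (forall k, y k = dot theta (x k) + eps k) ->
  (forall k, z k = dot a (x k) + eta k) ->
  (forall t, (1 <= t)%N -> roful_round X b Sa rho delta lam (Num.max Sa Sth) x xt y z t) ->
  E_conf X theta a rho delta lam (Num.max Sa Sth) x y z ->
  forall t : nat, (1 <= t <= T)%N ->
    dot theta (xt t - x t)
      <= Sth * (2 * betat d rho delta lam (Num.max Sa Sth) t / b)
             * normM (invmx (Vt lam x t)) (x t).
Proof.
move=> _ starX normX b0 Sa0 _ normth _ rho0 _ _ _ _ _ _ _ round _ t /andP[t1 _].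
have [Yo_xt _ ->] := round t t1.
set bt := betat d rho delta lam (Num.max Sa Sth) t in Yo_xt *.
have bt0 : 0 <= bt by rewrite betat_ge0 ?ltW // lt_max Sa0.
have mu01 := fraction01 b0 bt0 (normM_ge0 (invmx (Vt lam x t)) (xt t)).
have g_lb := gammat_ge (b / Sa) mu01 (Yo_scale_Yp starX b0 bt0 Yo_xt).
have Sth0 : 0 <= Sth := le_trans (enorm_ge0 theta) normth.
have theta_xt : dot theta (xt t) <= Sth.
  apply: le_trans (dot_le_enorm _ _) _.
  by rewrite -[leRHS]mulr1 ler_pM ?enorm_ge0 ?normX //; case: Yo_xt.
rewrite dotBr dotZr normMZ; last by apply: le_trans g_lb; case/andP: mu01.
by apply: gap_le_of_fraction_le; rewrite ?normM_ge0 ?gammat_le1.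
Qed.
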